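(* Let $f_1,\dots,f_k\in\mathcal{C}_n$ and $\varphi\in\mathcal{C}_k$. Then the function $f:\Gamma_+^{(n)}\to\mathbb{R}$ defined by $f(x_1,\dots,x_n)=\varphi\big(f_1(x_1,\dots,x_n),\dots,f_k(x_1,\dots,x_n)\big)$ belongs to $\mathcal{C}_n$. If moreover $f_1,\dots,f_k\in\mathcal{S}_n$, then $f\in\mathcal{S}_n$.
   Context: For $m\ge1$, $\Gamma_+^{(m)}=\{x\in\mathbb{R}^m: x_i>0\ \forall i\}$. $\mathcal{C}_m$ is the class of functions $g:\Gamma_+^{(m)}\to\mathbb{R}$ which are $C^\infty$, homogeneous of degree one ($g(cx)=cg(x)$ for $c>0$), strictly monotone increasing ($\partial g/\partial x_i>0$ for each $i$), concave, and inverse-concave, meaning $g^*(x_1,\dots,x_m)=-g(x_1^{-1},\dots,x_m^{-1})$ is concave on $\Gamma_+^{(m)}$. $\mathcal{S}_m$ is the subclass of symmetric functions (invariant under permutations of the arguments) in $\mathcal{C}_m$. (Functions in $\mathcal{C}_m$ take positive values, so the composition is defined.) *)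

From HB Require Import structures.
From mathcomp Require Import all_boot all_order all_algebra all_fingroup.
From mathcomp Require Import all_classical all_reals all_analysis.
Set Implicit Arguments. Unset Strict Implicit. Unset Printing Implicit Defensive.
Import Order.TTheory GRing.Theory Num.Theory.
Import numFieldNormedType.Exports.
Local Open Scope classical_set_scope.
Local Open Scope ring_scope.

Section Classes.
Variable R : realType.

Definition pos_cone (m : nat) : set 'rV[R]_m := [set x | forall i, 0 < x ord0 i].

Definition evec (m : nat) (i : 'I_m) : 'rV[R]_m := \row_j (i == j)%:R.

Definition pder (m : nat) (i : 'I_m) (g : 'rV[R]_m -> R) : 'rV[R]_m -> R :=
  fun x => 'D_(evec i) g x.

Definition ipder (m : nat) (s : seq 'I_m) (g : 'rV[R]_m -> R) : 'rV[R]_m -> R :=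
  foldr (@pder m) g s.

Definition smooth_on (m : nat) (U : set 'rV[R]_m) (g : 'rV[R]_m -> R) : Prop :=
  forall (s : seq 'I_m) (x : 'rV[R]_m), U x ->
    {for x, continuous (ipder s g)} /\
    (forall j : 'I_m, derivable (ipder s g) x (evec j)).

Definition homogeneous1 (m : nat) (g : 'rV[R]_m -> R) : Prop :=
  forall (c : R) (x : 'rV[R]_m), 0 < c -> @pos_cone m x -> g (c *: x) = c * g x.

Definition strictly_increasing (m : nat) (g : 'rV[R]_m -> R) : Prop :=
  forall (i : 'I_m) (x : 'rV[R]_m), @pos_cone m x -> 0 < pder i g x.

Definition concave_on_cone (m : nat) (g : 'rV[R]_m -> R) : Prop :=
  forall (x y : 'rV[R]_m) (t : R), @pos_cone m x -> @pos_cone m y -> 0 <= t -> t <= 1 ->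
    t * g x + (1 - t) * g y <= g (t *: x + (1 - t) *: y).

Definition inv_dual (m : nat) (g : 'rV[R]_m -> R) : 'rV[R]_m -> R :=
  fun x => - g (map_mx GRing.inv x).

Definition inverse_concave (m : nat) (g : 'rV[R]_m -> R) : Prop :=
  concave_on_cone (inv_dual g).

Definition class_C (m : nat) (g : 'rV[R]_m -> R) : Prop :=
  [/\ smooth_on (@pos_cone m) g, homogeneous1 g, strictly_increasing g,
      concave_on_cone g & inverse_concave g].

Definition symmetric_on_cone (m : nat) (g : 'rV[R]_m -> R) : Prop :=
  forall (s : 'S_m) (x : 'rV[R]_m), @pos_cone m x -> g (col_perm s x) = g x.

Definition class_S (m : nat) (g : 'rV[R]_m -> R) : Prop :=
  class_C g /\ symmetric_on_cone g.

Definition compose_classes (n k : nat) (phi : 'rV[R]_k -> R)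
  (fs : 'I_k -> 'rV[R]_n -> R) : 'rV[R]_n -> R :=
  fun x => phi (\row_j fs j x).

End Classes.

(* Write F = (f_1, ..., f_k).  A homogeneous function with positive partials is
   positive on the cone, so F maps the cone into itself, and phi is nondecreasing
   there; homogeneity, concavity and symmetry then pass from phi and the f_j to
   phi o F.  For inverse concavity, (phi o F)^* = phi^* o G with
   G_j(x) = 1 / f_j(x^-1); phi^* is nondecreasing, and each G_j is concave: after
   rescaling two points onto the level set {f_j(x^-1) = 1}, homogeneity reduces the
   claim to the concavity of f_j^* on that set.  Finally, continuous partials give
   differentiability, hence the chain rule
   d_i (phi o F) = sum_j d_i f_j * ((d_j phi) o F),
   which yields smoothness of phi o F by induction on the order of the derivatives
   and shows that its partials are positive. *)

Set Warnings "-notation-overridden,-ambiguous-paths,-notation-incompatible-prefix".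
From HB Require Import structures.
From mathcomp Require Import all_boot all_order all_algebra all_fingroup.
From mathcomp Require Import all_classical all_reals all_analysis.
From mathcomp Require Import ring lra.
Set Implicit Arguments. Unset Strict Implicit. Unset Printing Implicit Defensive.
Import Order.TTheory GRing.Theory Num.Theory.
Import numFieldNormedType.Exports.
Local Open Scope classical_set_scope.
Local Open Scope ring_scope.

Section RowVectors.
Variable R : realType.

Lemma rV_coord_le_norm m (v : 'rV[R]_m) i : `|v ord0 i| <= `|v|.
Proof.
rewrite [leRHS]/Num.Def.normr/= mx_normrE.
exact: le_trans (le_bigmax _ _ (ord0, i)).
Qed.

Lemma rV_norm_le m (v : 'rV[R]_m) r :
  0 <= r -> (forall i, `|v ord0 i| <= r) -> `|v| <= r.
Proof.
move=> r0 vr; rewrite /Num.Def.normr/= mx_normrE (bigmax_le _ r0)//= => -[i j] _.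
by rewrite /= (ord1 i).
Qed.

Lemma row_continuous (T : topologicalType) k (fs : 'I_k -> T -> R) x :
  (forall j, {for x, continuous (fs j)}) ->
  {for x, continuous (fun y => \row_j fs j y)}.
Proof.
move=> fs_cont; apply/(@cvgrPdist_le _ _ _ _ (nbhs_filter x)) => e e0.
have near_fs j : \forall y \near x, `|fs j x - fs j y| <= e.
  exact: (cvgrPdist_le _ _).1 (fs_cont j) _ e0.
apply: filterS (@filter_forall _ _ _ _ _ near_fs) => y fs_y.
by apply: rV_norm_le => [|j]; [exact: ltW | rewrite !mxE; apply: fs_y].
Qed.

Lemma row_derivable (V : normedModType R) k (fs : 'I_k -> V -> R) x v :
  (forall j, derivable (fs j) x v) ->
  derivable (fun y => \row_j fs j y) x v /\
  'D_v (fun y => \row_j fs j y) x = \row_j 'D_v (fs j) x.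
Proof.
move=> fs_der.
have coordE i j : (fun y => (\row_j fs j y) i j) = fs j.
  by apply/funext => y; rewrite mxE.
have F_der : derivable (fun y => \row_j fs j y) x v.
  by apply/derivable_mxP => i j; rewrite coordE.
split=> //; rewrite derive_mx //; apply/rowP => j.
by rewrite !mxE coordE.
Qed.

Definition row_prefix m (h : 'rV[R]_m) (q : nat) : 'rV[R]_m :=
  \row_i (if (i < q)%N then h ord0 i else 0).

Lemma row_prefix0 m (h : 'rV[R]_m) : row_prefix h 0 = 0.
Proof. by apply/rowP => i; rewrite !mxE. Qed.

Lemma row_prefix_full m (h : 'rV[R]_m) : row_prefix h m = h.
Proof. by apply/rowP => i; rewrite mxE ltn_ord. Qed.

Lemma row_prefixS m (h : 'rV[R]_m) (j : 'I_m) :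
  row_prefix h j.+1 = h ord0 j *: evec R j + row_prefix h j.
Proof.
apply/rowP => i; rewrite !mxE ltnS leq_eqVlt.
have [<-|ji] := eqVneq j i; first by rewrite eqxx ltnn mulr1 addr0.
rewrite mulr0 add0r; case: eqP => //= ij.
by case/eqP: ji; apply: val_inj.
Qed.

Lemma norm_row_prefix_step m (h : 'rV[R]_m) (j : 'I_m) s :
  `|s| <= `|h ord0 j| -> `|s *: evec R j + row_prefix h j| <= `|h|.
Proof.
move=> sh; apply: rV_norm_le => // i; rewrite !mxE.
have [<-|_] := eqVneq j i.
  by rewrite ltnn mulr1 addr0 (le_trans sh) ?rV_coord_le_norm.
by rewrite mulr0 add0r; case: ifP; rewrite ?normr0 ?rV_coord_le_norm.
Qed.

End RowVectors.

Section PositiveCone.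
Variable R : realType.
Local Notation cone := (@pos_cone R _).
Local Notation inv := (map_mx (@GRing.inv R)).

Lemma open_pos_cone m : open (@pos_cone R m).
Proof.
rewrite openE => x cx.
have near_coord i : \forall y \near x, 0 < (y : 'rV[R]_m) ord0 i.
  apply/nbhs_ballP; exists (x ord0 i); first exact: cx.
  move=> y; rewrite -ball_normE /= => xy.
  have := le_lt_trans (rV_coord_le_norm (x - y) i) xy.
  by rewrite !mxE ltr_norml => /andP[_]; lra.
exact: (@filter_forall _ _ _ _ _ near_coord).
Qed.

Lemma pos_cone_shift m (x : 'rV[R]_m) j s :
  cone x -> 0 <= s -> cone (s *: evec R j + x).
Proof.
move=> cx s0 i; rewrite !mxE; have := cx i.
by case: (j == i); rewrite ?mulr1 ?mulr0 ?add0r // => /(ltr_wpDl s0).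
Qed.

Lemma pos_cone_conv m (x y : 'rV[R]_m) t : cone x -> cone y -> 0 <= t -> t <= 1 ->
  cone (t *: x + (1 - t) *: y).
Proof.
move=> cx cy t0 t1 i; rewrite !mxE; have := cx i; have := cy i; nra.
Qed.

Lemma pos_cone_inv m (x : 'rV[R]_m) : cone x -> cone (inv x).
Proof. by move=> cx i; rewrite mxE invr_gt0. Qed.

Lemma pos_cone_scale m (x : 'rV[R]_m) c : 0 < c -> cone x -> cone (c *: x).
Proof. by move=> c0 cx i; rewrite mxE mulr_gt0. Qed.

Lemma map_inv_scale m (x : 'rV[R]_m) c : inv (c *: x) = c^-1 *: inv x.
Proof. by apply/rowP => i; rewrite !mxE invfM. Qed.

End PositiveCone.

Section Lines.
Variables (R : realType) (V W : normedModType R).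

Let line_quotientE (g : V -> W) a v t :
  (fun h : R => h^-1 *: (((fun s : R => g (s *: v + a)) \o shift t) (h *: 1)
     - g (t *: v + a))) =
  (fun h : R => h^-1 *: ((g \o shift (t *: v + a)) (h *: v) - g (t *: v + a))).
Proof. by apply/funext => h /=; rewrite scaler1 scalerDl addrA. Qed.

Lemma derivable_line (g : V -> W) a v t :
  derivable (fun s : R => g (s *: v + a)) t 1 <-> derivable g (t *: v + a) v.
Proof. by rewrite /derivable line_quotientE. Qed.

Lemma derive_line (g : V -> W) a v t :
  'D_1 (fun s : R => g (s *: v + a)) t = 'D_v g (t *: v + a).
Proof. by rewrite /derive line_quotientE. Qed.

Lemma derive_line0 (g : V -> W) a v :
  'D_1 (fun s : R => g (s *: v + a)) 0 = 'D_v g a.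
Proof. by rewrite derive_line scale0r add0r. Qed.

End Lines.

Lemma MVT0 (R : realType) (psi : R -> R) t :
  (forall s, `|s| <= `|t| -> derivable psi s 1) ->
  exists2 c, `|c| <= `|t| & psi t - psi 0 = 'D_1 psi c * t.
Proof.
move=> psi_der; have [t0|t0] := lerP 0 t.
  have [c] : exists2 c, c \in `[0, t]%R & psi t - psi 0 = 'D_1 psi c * (t - 0).
    apply: MVT_segment => //.
      move=> s; rewrite in_itv /= => /andP[s0 st]; apply/derivableP/psi_der.
      by rewrite !ger0_norm // ltW.
    apply: derivable_within_continuous => s; rewrite in_itv /= => /andP[s0 st].
    by apply: psi_der; rewrite !ger0_norm.
  by rewrite in_itv /= subr0 => /andP[c0 ct] ->; exists c; rewrite ?ger0_norm.
have [c] : exists2 c, c \in `[t, 0]%R & psi 0 - psi t = 'D_1 psi c * (0 - t).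
  apply: MVT_segment; first exact: ltW.
    move=> s; rewrite in_itv /= => /andP[ts s0]; apply/derivableP/psi_der.
    by rewrite !ler0_norm ?lerN2 // ltW.
  apply: derivable_within_continuous => s; rewrite in_itv /= => /andP[ts s0].
  by apply: psi_der; rewrite !ler0_norm ?lerN2 // ltW.
rewrite in_itv /= sub0r mulrN => /andP[tc c0] E; exists c.
  by rewrite !ler0_norm ?lerN2 // ltW.
by rewrite -opprB E opprK.
Qed.

Section IncreasingFunctions.
Variable R : realType.
Local Notation cone := (@pos_cone R _).

Definition nondecreasing_on_cone m (g : 'rV[R]_m -> R) :=
  forall u v, cone u -> cone v -> (forall i, u ord0 i <= v ord0 i) -> g u <= g v.

Variables (m : nat) (g : 'rV[R]_m -> R).
Hypothesis g_der : forall x, cone x -> forall j, derivable g x (evec R j).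
Hypothesis g_incr : strictly_increasing g.

Lemma lt_shift_evec x j t : cone x -> 0 < t -> g x < g (t *: evec R j + x).
Proof.
move=> cx t0; pose psi s := g (s *: evec R j + x).
have psi_der s : 0 <= s -> derivable psi s 1.
  by move=> s0; apply/derivable_line/g_der/pos_cone_shift.
have [c] : exists2 c, c \in `]0, t[%R & psi t - psi 0 = 'D_1 psi c * (t - 0).
  apply: MVT => //.
    by move=> s; rewrite in_itv /= => /andP[s0 _]; apply/derivableP/psi_der/ltW.
  apply: derivable_within_continuous => s; rewrite in_itv /= => /andP[s0 _].
  exact: psi_der.
rewrite in_itv /= => /andP[c0 _].
rewrite /psi scale0r add0r subr0 derive_line => E.
by rewrite -subr_gt0 E mulr_gt0 // g_incr //; apply: pos_cone_shift; rewrite // ltW.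
Qed.

Lemma nondecreasing_on_cone_incr : nondecreasing_on_cone g.
Proof.
move=> x y cx cy xy; pose z p := row_prefix (y - x) p + x.
have zE p i : z p ord0 i = if (i < p)%N then y ord0 i else x ord0 i.
  by rewrite !mxE; case: ifP; rewrite ?add0r // subrK.
suff le_z p : (p <= m)%N -> g x <= g (z p).
  have := le_z m (leqnn m); congr (_ <= g _).
  by rewrite /z row_prefix_full subrK.
elim: p => [_|p IH pm]; first by rewrite /z row_prefix0 add0r.
apply: le_trans (IH (ltnW pm)) _.
pose j := Ordinal pm.
have -> : z p.+1 = (y ord0 j - x ord0 j) *: evec R j + z p.
  by rewrite /z -[p.+1]/(j.+1) row_prefixS !mxE addrA.
have cz : cone (z p) by move=> i; rewrite zE; case: ifP.
have := xy j; rewrite le_eqVlt => /predU1P[->|xy_j].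
  by rewrite subrr scale0r add0r.
by apply/ltW/lt_shift_evec; rewrite ?subr_gt0.
Qed.

Lemma homogeneous_increasing_gt0 :
  (0 < m)%N -> homogeneous1 g -> forall x, cone x -> 0 < g x.
Proof.
move=> m0 g_hom x cx; pose j := Ordinal m0.
have lt_gx : g x < g (x ord0 j *: evec R j + x) by apply: lt_shift_evec.
have le_g2x : g (x ord0 j *: evec R j + x) <= g (2 *: x).
  apply: nondecreasing_on_cone_incr.
  - exact/pos_cone_shift/ltW.
  - exact: pos_cone_scale.
  move=> i; rewrite !mxE; have [<-|_] := eqVneq j i.
    by rewrite mulr1 mulr_natl mulr2n.
  by rewrite mulr0 add0r ler_pMl // ler1n.
move: le_g2x; rewrite g_hom //; lra.
Qed.

End IncreasingFunctions.

Section InverseConcavity.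
Variable R : realType.
Local Notation cone := (@pos_cone R _).
Local Notation inv := (map_mx (@GRing.inv R)).

Definition recip_dual m (g : 'rV[R]_m -> R) (x : 'rV[R]_m) : R := (g (inv x))^-1.

Lemma recip_dual_concave m (g : 'rV[R]_m -> R) :
  homogeneous1 g -> inverse_concave g -> (forall z, cone z -> 0 < g z) ->
  concave_on_cone (recip_dual g).
Proof.
move=> g_hom g_ic g_pos x y t cx cy t0 t1; rewrite /recip_dual.
set a := (g (inv x))^-1; set b := (g (inv y))^-1.
have a0 : 0 < a by rewrite invr_gt0; apply/g_pos/pos_cone_inv.
have b0 : 0 < b by rewrite invr_gt0; apply/g_pos/pos_cone_inv.
set S := t * a + (1 - t) * b; have S0 : 0 < S by rewrite /S; nra.
set lam := t * a / S.
have lam0 : 0 <= lam by rewrite /lam divr_ge0 //; nra.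
have lam1 : lam <= 1 by rewrite /lam ler_pdivrMr // mul1r /S; nra.
(* [a^-1 *: x] and [b^-1 *: y] lie on the level set [g (inv _) = 1], and
   [t *: x + (1 - t) *: y = S *: u] for their convex combination [u] below. *)
have level_one z : cone z -> g (inv ((g (inv z))^-1^-1 *: z)) = 1.
  move=> /pos_cone_inv cz; have gz0 : 0 < g (inv z) by apply: g_pos.
  by rewrite invrK map_inv_scale g_hom ?invr_gt0 // mulVf // gt_eqF.
set u := lam *: (a^-1 *: x) + (1 - lam) *: (b^-1 *: y).
have cxa : cone (a^-1 *: x) by apply: pos_cone_scale cx; rewrite invr_gt0.
have cyb : cone (b^-1 *: y) by apply: pos_cone_scale cy; rewrite invr_gt0.
have cu : cone u by apply: pos_cone_conv.
have g_u : g (inv u) <= 1.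
  have := g_ic _ _ _ cxa cyb lam0 lam1.
  by rewrite /inv_dual -/u !level_one //; lra.
have -> : t *: x + (1 - t) *: y = S *: u.
  apply/rowP => i; rewrite !mxE /lam /S; field.
  by rewrite !gt_eqF.
have cu' := pos_cone_inv cu.
rewrite map_inv_scale g_hom ?invr_gt0 // invfM invrK.
have g_u0 : 0 < g (inv u) by apply/g_pos/pos_cone_inv.
by rewrite -[leLHS]mulr1 ler_pM2l // -invr1 lef_pV2 ?posrE // invr1.
Qed.

End InverseConcavity.

Section CompositionOrder.
Variable R : realType.
Local Notation cone := (@pos_cone R _).
Local Notation inv := (map_mx (@GRing.inv R)).
Variables (n k : nat) (fs : 'I_k -> 'rV[R]_n -> R) (phi : 'rV[R]_k -> R).
Hypothesis fs_cone : forall x, cone x -> cone (\row_j fs j x).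
Hypothesis phi_mono : nondecreasing_on_cone phi.

Lemma homogeneous1_compose : (forall j, homogeneous1 (fs j)) -> homogeneous1 phi ->
  homogeneous1 (compose_classes phi fs).
Proof.
move=> fs_hom phi_hom c x c0 cx; rewrite /compose_classes -phi_hom; last exact: fs_cone.
  by congr phi; apply/rowP => j; rewrite !mxE fs_hom.
by [].
Qed.

Lemma concave_compose : (forall j, concave_on_cone (fs j)) -> concave_on_cone phi ->
  concave_on_cone (compose_classes phi fs).
Proof.
move=> fs_cv phi_cv x y t cx cy t0 t1.
apply: le_trans (phi_cv _ _ _ (fs_cone cx) (fs_cone cy) t0 t1) _.
apply: phi_mono; first by apply: pos_cone_conv => //; apply: fs_cone.
  exact/fs_cone/pos_cone_conv.
by move=> i; rewrite !mxE fs_cv.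
Qed.

Lemma inverse_concave_compose : (forall j, homogeneous1 (fs j)) ->
  (forall j, inverse_concave (fs j)) -> inverse_concave phi ->
  inverse_concave (compose_classes phi fs).
Proof.
move=> fs_hom fs_ic phi_ic.
pose G x := \row_j recip_dual (fs j) x.
have fs_pos j z : cone z -> 0 < fs j z by move/fs_cone/(_ j); rewrite mxE.
have G_cone x : cone x -> cone (G x).
  by move=> cx j; rewrite mxE invr_gt0; apply/fs_pos/pos_cone_inv.
have dualE x : inv_dual (compose_classes phi fs) x = inv_dual phi (G x).
  by congr (- phi _); apply/rowP => j; rewrite !mxE invrK.
have dual_mono : nondecreasing_on_cone (inv_dual phi).
  move=> u v cu cv uv; rewrite lerN2.
  apply: phi_mono; [exact: pos_cone_inv | exact: pos_cone_inv | move=> i].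
  by rewrite !mxE lef_pV2 ?posrE ?(cu i) ?(cv i).
move=> x y t cx cy t0 t1; rewrite !dualE.
apply: le_trans (phi_ic _ _ _ (G_cone _ cx) (G_cone _ cy) t0 t1) _.
apply: dual_mono; first by apply: pos_cone_conv => //; apply: G_cone.
  exact/G_cone/pos_cone_conv.
by move=> j; rewrite !mxE; apply: (recip_dual_concave (fs_hom j) (fs_ic j) (fs_pos j)).
Qed.

Lemma symmetric_compose : (forall j, symmetric_on_cone (fs j)) ->
  symmetric_on_cone (compose_classes phi fs).
Proof.
by move=> fs_sym s x cx; congr phi; apply/rowP => j; rewrite !mxE fs_sym.
Qed.

End CompositionOrder.

Section Smoothness.
Variable R : realType.

Definition cont_derivable_at m (g : 'rV[R]_m -> R) (x : 'rV[R]_m) : Prop :=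
  {for x, continuous g} /\ forall j, derivable g x (evec R j).

Lemma ipder_rcons m s i (g : 'rV[R]_m -> R) :
  ipder (rcons s i) g = ipder s (pder i g).
Proof. by rewrite /ipder foldr_rcons. Qed.

Section SmoothUpto.
Variables (m : nat) (U : set 'rV[R]_m).

Fixpoint smooth_upto (N : nat) (g : 'rV[R]_m -> R) : Prop :=
  (forall x, U x -> cont_derivable_at g x) /\
  if N is N'.+1 then forall i, smooth_upto N' (pder i g) else True.

Lemma smooth_upto_at N g x : smooth_upto N g -> U x -> cont_derivable_at g x.
Proof. by case: N => [|N] [gU _]; apply: gU. Qed.

Lemma smooth_upto_pder N g i : smooth_upto N.+1 g -> smooth_upto N (pder i g).
Proof. by case=> _; apply. Qed.

Lemma smooth_upto_le N M g : (N <= M)%N -> smooth_upto M g -> smooth_upto N g.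
Proof.
elim: N M g => [|N IH] [|M] g //= NM [gU gM]; split=> // i.
exact: IH (gM i).
Qed.

Lemma smooth_uptoE N g : smooth_upto N g <->
  forall s : seq 'I_m, (size s <= N)%N -> forall x, U x -> cont_derivable_at (ipder s g) x.
Proof.
elim: N g => [|N IH] g /=.
  split=> [[gU _] [|//] _ //|gs]; split=> //; exact: gs [::] _.
split=> [[gU gN] s|gs].
  case/lastP: s => [_ //|s i]; rewrite size_rcons ltnS ipder_rcons.
  exact: (IH _).1 (gN i) s.
split=> [|i]; first exact: gs [::] _.
by apply/IH => s sN; rewrite -ipder_rcons; apply: gs; rewrite size_rcons.
Qed.

Lemma smooth_onP g : smooth_on U g <-> forall N, smooth_upto N g.
Proof.
split=> [gs N|gN s]; first by apply/smooth_uptoE => s _; apply: gs.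
exact: (smooth_uptoE _ _).1 (gN (size s)) s (leqnn _).
Qed.

Lemma smooth_upto_cst N c : smooth_upto N (fun=> c).
Proof.
have cst_at c' x : cont_derivable_at (fun=> c') x.
  by split=> [|j]; [exact: cst_continuous | exact: derivable_cst].
elim: N c => [|N IH] c; split=> [x _|//]; try exact: cst_at.
move=> i; have -> : pder i (fun=> c) = fun=> 0.
  by apply/funext => x; rewrite /pder derive_cst.
exact: IH.
Qed.

Hypothesis U_open : open U.

Let near_U x : U x -> \forall z \near x, U z.
Proof. by move: U_open; rewrite openE; apply. Qed.

Lemma cont_derivable_at_eq g h x : (forall z, U z -> g z = h z) -> U x ->
  cont_derivable_at g x -> cont_derivable_at h x.
Proof.
move=> gh Ux [g_cont g_der].
have near_gh : {near x, g =1 h} by apply: filterS (near_U Ux).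
split=> [|j]; last exact: near_eq_derivable (g_der j).
apply: (@cvgrPdist_le _ _ _ _ (nbhs_filter x) _ _).2 => e e0.
have near_g := (@cvgrPdist_le _ _ _ _ (nbhs_filter x) _ _).1 g_cont _ e0.
by apply: filterS (filterI near_g near_gh) => z [+ <-]; rewrite -(gh x Ux).
Qed.

Lemma pder_eq_on g h i x : (forall z, U z -> g z = h z) -> U x ->
  pder i g x = pder i h x.
Proof. by move=> gh Ux; apply: near_eq_derive; apply: filterS (near_U Ux). Qed.

Lemma smooth_upto_eq N g h : (forall z, U z -> g z = h z) ->
  smooth_upto N g -> smooth_upto N h.
Proof.
elim: N g h => [|N IH] g h gh [gU gN]; split=> [x Ux|//];
  try exact: cont_derivable_at_eq (gU x Ux).
by move=> i; apply: IH (gN i) => z Uz; apply: pder_eq_on.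
Qed.

Lemma smooth_upto_add N g h : smooth_upto N g -> smooth_upto N h ->
  smooth_upto N (g + h).
Proof.
have gh_at M g' h' x : smooth_upto M g' -> smooth_upto M h' -> U x ->
    cont_derivable_at (g' + h') x.
  move=> g'M h'M Ux.
  have [g'_cont g'_der] := smooth_upto_at g'M Ux.
  have [h'_cont h'_der] := smooth_upto_at h'M Ux.
  by split=> [|j]; [exact: continuousD | exact: derivableD].
elim: N g h => [|N IH] g h gN hN; split=> [x Ux|//]; try exact: gh_at _ _ _ x gN hN Ux.
move=> i.
apply: (@smooth_upto_eq _ (pder i g + pder i h)).
  move=> z Uz; have [_ g_der] := smooth_upto_at gN Uz.
  by have [_ h_der] := smooth_upto_at hN Uz; rewrite /pder deriveD.
by apply: IH; apply: smooth_upto_pder.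
Qed.

Lemma smooth_upto_mul N g h : smooth_upto N g -> smooth_upto N h ->
  smooth_upto N (g * h).
Proof.
have gh_at M g' h' x : smooth_upto M g' -> smooth_upto M h' -> U x ->
    cont_derivable_at (g' * h') x.
  move=> g'M h'M Ux.
  have [g'_cont g'_der] := smooth_upto_at g'M Ux.
  have [h'_cont h'_der] := smooth_upto_at h'M Ux.
  by split=> [|j]; [exact: continuousM | exact: derivableM].
elim: N g h => [|N IH] g h gN hN; split=> [x Ux|//]; try exact: gh_at _ _ _ x gN hN Ux.
move=> i.
apply: (@smooth_upto_eq _ (g * pder i h + h * pder i g)).
  move=> z Uz; have [_ g_der] := smooth_upto_at gN Uz.
  by have [_ h_der] := smooth_upto_at hN Uz; rewrite /pder deriveM.
have gN' := smooth_upto_le (leqnSn N) gN; have hN' := smooth_upto_le (leqnSn N) hN.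
by apply: smooth_upto_add; apply: IH => //; apply: smooth_upto_pder.
Qed.

Lemma smooth_upto_sum N (I : Type) (r : seq I) (F : I -> 'rV[R]_m -> R) :
  (forall j, smooth_upto N (F j)) ->
  smooth_upto N (fun x => \sum_(j <- r) F j x).
Proof.
move=> FN; elim: r => [|a r IH].
  by apply: smooth_upto_eq (smooth_upto_cst N 0) => z _; rewrite big_nil.
by apply: smooth_upto_eq (smooth_upto_add (FN a) IH) => z _; rewrite big_cons.
Qed.

End SmoothUpto.
End Smoothness.

Section PartialsDifferentiable.
Variable R : realType.

Definition lin_coords m (c : 'I_m -> R) (h : 'rV[R]_m) : R := \sum_j h ord0 j * c j.

Lemma lin_coords_linear m (c : 'I_m -> R) : linear (lin_coords c).
Proof.
move=> a u v; rewrite /lin_coords /= scaler_sumr -big_split /=.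
by apply: eq_bigr => j _; rewrite !mxE mulrDl -mulrA.
Qed.

Lemma lin_coords_continuous m (c : 'I_m -> R) : continuous (lin_coords c).
Proof.
apply: (@continuous_big R _ +%R 0 xpredT); first exact: add_continuous.
by move=> j _ x; apply: continuousM; [exact: coord_continuous | exact: cst_continuous].
Qed.

Section IncrementBound.
Variables (m : nat) (phi : 'rV[R]_m -> R) (y : 'rV[R]_m) (c : 'I_m -> R) (e del : R).
Hypothesis partials_near : forall z, `|y - z| < del ->
  (forall j, derivable phi z (evec R j)) /\ forall j, `|c j - pder j phi z| <= e.

Lemma coord_increment_le h (j : 'I_m) : `|h| < del ->
  `|phi (row_prefix h j.+1 + y) - phi (row_prefix h j + y) - h ord0 j * c j|
    <= `|h| * e.
Proof.
move=> h_del; rewrite row_prefixS -(addrA (h ord0 j *: evec R j)).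
pose psi s := phi (s *: evec R j + (row_prefix h j + y)).
have near_s s : `|s| <= `|h ord0 j| ->
    `|y - (s *: evec R j + (row_prefix h j + y))| < del.
  move=> sh; rewrite addrA opprD addrCA subrr addr0 normrN.
  exact: le_lt_trans (norm_row_prefix_step sh) h_del.
have [s sh] := @MVT0 R psi (h ord0 j)
  (fun s sh => (derivable_line _ _ _ _).2 ((partials_near (near_s s sh)).1 j)).
rewrite /psi scale0r add0r => ->; rewrite derive_line mulrC -mulrBr normrM.
apply: ler_pM => //; first exact: rV_coord_le_norm.
by rewrite distrC; apply: (partials_near (near_s s sh)).2.
Qed.

Lemma increment_le h : `|h| < del ->
  `|phi (h + y) - (phi y + lin_coords c h)| <= `|h| * e * m%:R.
Proof.
move=> h_del.
have telescope : phi (h + y) - phi y =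
    \sum_(j < m) (phi (row_prefix h j.+1 + y) - phi (row_prefix h j + y)).
  have := telescope_sumr (fun q => phi (row_prefix h q + y)) (leq0n m).
  by rewrite big_mkord row_prefix_full row_prefix0 add0r => ->.
rewrite opprD addrA telescope /lin_coords -sumrB.
apply: le_trans (ler_norm_sum _ _ _) _.
apply: le_trans (ler_sum _ (fun j _ => coord_increment_le j h_del)) _.
by rewrite sumr_const card_ord mulr_natr.
Qed.

End IncrementBound.

Lemma differentiable_partials m (phi : 'rV[R]_m -> R) y :
  (\forall z \near y, forall j, derivable phi z (evec R j)) ->
  (forall j, {for y, continuous (pder j phi)}) ->
  differentiable phi y /\
  forall h, 'd phi y h = lin_coords (fun j => pder j phi y) h.
Proof.
move=> near_der pder_cont; set c := fun j => pder j phi y.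
pose L : {linear 'rV[R]_m -> R} :=
  HB.pack (lin_coords c) (GRing.isLinear.Build _ _ _ _ _ (lin_coords_linear c)).
have L_cont : continuous L by exact: lin_coords_continuous.
have phi_expansion : phi \o shift y = cst (phi y) + L +o_ 0 id.
  apply/eqaddoP => eps eps0.
  have m1_gt0 : 0 < (m%:R + 1 : R) by rewrite ltr_wpDl.
  set e := eps / (m%:R + 1); have e0 : 0 < e by rewrite divr_gt0.
  have near_c j : \forall z \near y, `|c j - pder j phi z| <= e.
    exact: (cvgrPdist_le _ _).1 (pder_cont j) _ e0.
  have [del del0 ball_del] : exists2 del : R, 0 < del & forall z, `|y - z| < del ->
      (forall j, derivable phi z (evec R j)) /\ forall j, `|c j - pder j phi z| <= e.
    have : \forall z \near y, (forall j, derivable phi z (evec R j)) /\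
        forall j, `|c j - pder j phi z| <= e.
      exact: filterS (filterI near_der (@filter_forall _ _ _ _ _ near_c)).
    move=> /nbhs_ballP[del del0 del_near].
    by exists del => // z yz; apply: del_near; rewrite -ball_normE.
  apply/nbhs_ballP; exists del => // h; rewrite -ball_normE /= sub0r normrN => h_del.
  apply: le_trans (increment_le ball_del h_del) _.
  rewrite -mulrA mulrC ler_wpM2r //.
  by rewrite /e mulrAC ler_pdivrMr // ler_pM2l // lerDl.
have dE := diff_unique L_cont phi_expansion.
split; last by move=> h; rewrite dE.
by apply/diff_locallyP; rewrite dE.
Qed.

End PartialsDifferentiable.

Lemma derive_comp_dir (R : realType) (U V W : normedModType R)
  (phi : V -> W) (G : U -> V) x v :
  differentiable phi (G x) -> derivable G x v ->
  derivable (phi \o G) x v /\ 'D_v (phi \o G) x = 'd phi (G x) ('D_v G x).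
Proof.
move=> phi_diff G_der; pose g h := G (h *: v + x).
have g_diff : differentiable g 0.
  exact/derivable1_diffP/(derivable1P G x v).1.
have g0 : g 0 = G x by rewrite /g scale0r add0r.
have phi_diff' : differentiable phi (g 0) by rewrite g0.
have phig_diff : differentiable (phi \o g) 0 := differentiable_comp g_diff phi_diff'.
split; first exact/derivable1P/diff_derivable.
rewrite -(derive_line0 (phi \o G) x v) -[fun s => (phi \o G) _]/(phi \o g).
rewrite deriveE // diff_comp // /= g0; congr ('d phi (G x) _).
by rewrite -deriveE // /g derive_line0.
Qed.

Lemma smooth_upto_differentiable (R : realType) m (V : set 'rV[R]_m)
    (phi : 'rV[R]_m -> R) y :
  open V -> smooth_upto V 1 phi -> V y ->
  differentiable phi y /\
  forall h, 'd phi y h = lin_coords (fun j => pder j phi y) h.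
Proof.
move=> V_open [phiV pder_phi] Vy; apply: differentiable_partials.
  by move: V_open; rewrite openE => /(_ y Vy); apply: filterS => z /phiV[].
by move=> j; have [+ _] := pder_phi j; move=> /(_ y Vy)[].
Qed.

Section Composition.
Variables (R : realType) (n k : nat) (U : set 'rV[R]_n) (V : set 'rV[R]_k).
Hypotheses (U_open : open U) (V_open : open V).
Variable fs : 'I_k -> 'rV[R]_n -> R.
Hypothesis fs_V : forall x, U x -> V (\row_j fs j x).

Lemma pder_compose phi x i : smooth_upto V 1 phi -> U x ->
  (forall j, derivable (fs j) x (evec R i)) ->
  derivable (compose_classes phi fs) x (evec R i) /\
  pder i (compose_classes phi fs) x =
    \sum_j pder i (fs j) x * pder j phi (\row_l fs l x).
Proof.
move=> phi1 Ux fs_der.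
have [phi_diff dphiE] := smooth_upto_differentiable V_open phi1 (fs_V Ux).
have [F_der DFE] := row_derivable fs_der.
have [comp_der DcompE] := derive_comp_dir phi_diff F_der.
split=> //; rewrite /pder /compose_classes -/(phi \o _) DcompE DFE dphiE.
by apply: eq_bigr => j _; rewrite mxE.
Qed.

Lemma cont_derivable_compose phi x : smooth_upto V 1 phi -> U x ->
  (forall j, cont_derivable_at (fs j) x) ->
  cont_derivable_at (compose_classes phi fs) x.
Proof.
move=> phi1 Ux fs_x; split=> [|i].
  apply: continuous_comp; first exact: row_continuous (fun j => (fs_x j).1).
  by have [+ _] := smooth_upto_at phi1 (fs_V Ux).
by have [] := pder_compose phi1 Ux (fun j => (fs_x j).2 i).
Qed.

Lemma smooth_upto_compose N phi : smooth_upto V N.+1 phi ->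
  (forall j, smooth_upto U N (fs j)) -> smooth_upto U N (compose_classes phi fs).
Proof.
elim: N phi => [|N IH] phi phiN fsN; split=> [x Ux|//];
  try exact: cont_derivable_compose (smooth_upto_le _ phiN) Ux
    (fun j => smooth_upto_at (fsN j) Ux).
move=> i; apply: (smooth_upto_eq U_open
  (g := fun x => \sum_j (pder i (fs j) * compose_classes (pder j phi) fs) x)).
  move=> z Uz; have phi1 := smooth_upto_le (isT : (1 <= N.+2)%N) phiN.
  by rewrite (pder_compose phi1 Uz (fun j => (smooth_upto_at (fsN j) Uz).2 i)).2.
apply: (smooth_upto_sum U_open) => j.
apply: (smooth_upto_mul U_open); first exact: smooth_upto_pder.
apply: IH; first exact: smooth_upto_pder.
by move=> l; apply: smooth_upto_le (leqnSn N) (fsN l).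
Qed.

Lemma smooth_on_compose phi : smooth_on V phi -> (forall j, smooth_on U (fs j)) ->
  smooth_on U (compose_classes phi fs).
Proof.
move=> /smooth_onP phiN fs_smooth; apply/smooth_onP => N.
apply: smooth_upto_compose (phiN N.+1) _ => j.
by have /smooth_onP := fs_smooth j.
Qed.

End Composition.

Lemma strictly_increasing_compose (R : realType) n k (fs : 'I_k -> 'rV[R]_n -> R)
    (phi : 'rV[R]_k -> R) :
  (0 < k)%N -> (forall x, pos_cone x -> pos_cone (\row_j fs j x)) ->
  smooth_on (@pos_cone R k) phi -> (forall j, smooth_on (@pos_cone R n) (fs j)) ->
  strictly_increasing phi -> (forall j, strictly_increasing (fs j)) ->
  strictly_increasing (compose_classes phi fs).
Proof.
move=> k0 fs_cone /smooth_onP phiN fs_smooth phi_incr fs_incr i x cx.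
have fs_der j : derivable (fs j) x (evec R i) by have [_] := fs_smooth j [::] x cx.
have [_ ->] := pder_compose (@open_pos_cone R k) fs_cone (phiN 1%N) cx fs_der.
have term_gt0 j : 0 < pder i (fs j) x * pder j phi (\row_l fs l x).
  by apply: mulr_gt0; [apply: fs_incr | apply/phi_incr/fs_cone].
rewrite (bigD1 (Ordinal k0)) //= ltr_pwDl // sumr_ge0 // => j _.
exact/ltW.
Qed.

Theorem theorem2p7 (R : realType) (n k : nat) (hn : (0 < n)%N) (hk : (0 < k)%N)
  (fs : 'I_k -> 'rV[R]_n -> R) (phi : 'rV[R]_k -> R) :
  (forall j, class_C (fs j)) -> class_C phi ->
  class_C (compose_classes phi fs) /\
  ((forall j, class_S (fs j)) -> class_S (compose_classes phi fs)).
Proof.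
move=> /all_and5[fs_smooth fs_hom fs_incr fs_cv fs_ic].
move=> [phi_smooth phi_hom phi_incr phi_cv phi_ic].
have fs_der j x : pos_cone x -> forall i, derivable (fs j) x (evec R i).
  by move=> cx i; have [_] := fs_smooth j [::] x cx.
have phi_der y : pos_cone y -> forall i, derivable phi y (evec R i).
  by move=> cy i; have [_] := phi_smooth [::] y cy.
have fs_cone x : pos_cone x -> pos_cone (\row_j fs j x).
  move=> cx j; rewrite mxE.
  exact: homogeneous_increasing_gt0 (fs_der j) (fs_incr j) hn (fs_hom j) _ cx.
have phi_mono := nondecreasing_on_cone_incr phi_der phi_incr.
have C_compose : class_C (compose_classes phi fs).
  split.
  - exact: (smooth_on_compose (@open_pos_cone R n) (@open_pos_cone R k) fs_cone
      phi_smooth fs_smooth).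
  - exact: homogeneous1_compose.
  - exact: strictly_increasing_compose.
  - exact: concave_compose.
  - exact: inverse_concave_compose.
split=> // fs_S; split=> //.
by apply: symmetric_compose => j; case: (fs_S j).
Qed.
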